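(* For every $\mu\in[0,2]$, with $v_1=\frac{2}{2+\mu}$, \[ \psi(C^{\searrow}_\mu)=-2v_1^2+6v_1-5+\frac1{v_1},\qquad \xi(C^{\searrow}_\mu)=-4v_1^2+20v_1-17+\frac{2}{v_1}-\frac1{v_1^2}-12\ln(v_1). \] As $\mu$ ranges over $[0,2]$, $\mu\mapsto\psi(C^{\searrow}_\mu)$ is continuous and strictly decreasing from $0$ to $-\frac12$, and $\mu\mapsto\xi(C^{\searrow}_\mu)$ is continuous and strictly increasing from $0$ to $12\ln 2-8$.
   Context: For $\mu\in[0,2]$ let $v_0=\frac{\mu}{2+\mu}$, $v_1=\frac{2}{2+\mu}$ and define $h_\mu(t,v)=h_1(v)\mathbf{1}_{\{t\le v\}}+h_2(v)\mathbf{1}_{\{t>v\}}$ on $[0,1]^2$, where $(h_1,h_2)(v)=(0,\frac{v}{1-v})$ for $v\in[0,v_0]$, $(h_1,h_2)(v)=(v-\frac{\mu}{2}(1-v),\,v+\frac{\mu}{2}v)$ for $v\in(v_0,v_1]$, and $(h_1,h_2)(v)=(2-\frac1v,\,1)$ for $v\in(v_1,1]$. $C^{\searrow}_\mu(u,v):=\int_0^u h_\mu(t,v)\,dt$ (this is in general not a copula). For any function $C$ of this form with first partial derivative $h=\partial_1C$, set $\xi(C)=6\int_0^1\int_0^1 h(t,v)^2\,dt\,dv-2$ and $\psi(C)=6\int_0^1\int_0^1\mathbf{1}_{\{t\le v\}}h(t,v)\,dt\,dv-2$ (for copulas these coincide with $6\int\int(\partial_1C)^2-2$ and $6\int_0^1C(u,u)\,du-2$).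 *)

From Stdlib Require Import Reals.
From Coquelicot Require Import Coquelicot.
Open Scope R_scope.

Definition v0 (mu : R) : R := mu / (2 + mu).
Definition v1 (mu : R) : R := 2 / (2 + mu).

Definition h1 (mu v : R) : R :=
  if Rle_dec v (v0 mu) then 0
  else if Rle_dec v (v1 mu) then v - mu / 2 * (1 - v)
  else 2 - 1 / v.

Definition h2 (mu v : R) : R :=
  if Rle_dec v (v0 mu) then v / (1 - v)
  else if Rle_dec v (v1 mu) then v + mu / 2 * v
  else 1.

Definition h_mu (mu t v : R) : R :=
  if Rle_dec t v then h1 mu v else h2 mu v.

Definition C_down (mu u v : R) : R := RInt (fun t => h_mu mu t v) 0 u.

(* xi and psi of a function C = int_0^u h(t,v) dt, expressed via h = d_1 C *)
Definition xi_h (h : R -> R -> R) : R :=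
  6 * RInt (fun v => RInt (fun t => (h t v) ^ 2) 0 1) 0 1 - 2.

Definition psi_h (h : R -> R -> R) : R :=
  6 * RInt (fun v => RInt (fun t => (if Rle_dec t v then 1 else 0) * h t v) 0 1) 0 1 - 2.

Definition xi_down (mu : R) : R := xi_h (h_mu mu).
Definition psi_down (mu : R) : R := psi_h (h_mu mu).

Definition in02 (x : R) : Prop := 0 <= x <= 2.

(* For fixed v, t |-> h_mu(t,v) is a two-step function, so the inner
   integrals are v h1(v) (for psi) and v h1(v)^2 + (1-v) h2(v)^2 (for xi);
   these are elementary on each of [0,v0], [v0,v1], [v1,1] and integrate in
   closed form.  Since 1 - v0 = v1, both values are functions ("profiles") of
   v1 alone.  As mu runs over [0,2], v1 decreases from 1 to 1/2, and on
   [1/2,1] the psi-profile is increasing and the xi-profile decreasing. *)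

From Stdlib Require Import Reals Lra.
From Coquelicot Require Import Coquelicot.
Open Scope R_scope.

Lemma is_RInt_antiderivative (g f F : R -> R) (p q : R) : p <= q ->
  (forall x, p <= x <= q -> is_derive F x (f x)) ->
  (forall x, p <= x <= q -> continuous f x) ->
  (forall x, p < x < q -> f x = g x) -> is_RInt g p q (F q - F p).
Proof.
  intros Hpq HF Hf Hfg.
  apply is_RInt_ext with f.
  { rewrite Rmin_left, Rmax_right by lra. exact Hfg. }
  apply (is_RInt_derive F f p q); rewrite Rmin_left, Rmax_right by lra; assumption.
Qed.

Lemma RInt_two_step (g : R -> R) (v c1 c2 : R) : 0 < v < 1 ->
  (forall t, 0 < t < v -> g t = c1) -> (forall t, v < t < 1 -> g t = c2) ->
  RInt g 0 1 = v * c1 + (1 - v) * c2.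
Proof.
  intros Hv Hg1 Hg2. apply is_RInt_unique.
  replace (v * c1 + (1 - v) * c2) with ((v - 0) * c1 + (1 - v) * c2) by ring.
  apply (is_RInt_Chasles g 0 v 1).
  - apply is_RInt_ext with (fun _ => c1); [|exact (is_RInt_const 0 v c1)].
    rewrite Rmin_left, Rmax_right by lra. intros; symmetry; auto.
  - apply is_RInt_ext with (fun _ => c2); [|exact (is_RInt_const v 1 c2)].
    rewrite Rmin_left, Rmax_right by lra. intros; symmetry; auto.
Qed.

Lemma filterlim_within_continuous_eq (P : R -> Prop) (g f : R -> R) (x : R) :
  P x -> (forall y, P y -> g y = f y) -> continuous f x ->
  filterlim g (within P (locally x)) (locally (g x)).
Proof.
  intros Hx Hgf Hf. rewrite (Hgf x Hx).
  apply filterlim_within_ext with f; [intros y Hy; symmetry; auto|].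
  apply (filterlim_filter_le_1 (F := locally x)); [apply filter_le_within | exact Hf].
Qed.

Lemma lt_of_derive_pos (f f' : R -> R) (x y : R) : x < y ->
  (forall c, x <= c <= y -> is_derive f c (f' c)) ->
  (forall c, x < c < y -> 0 < f' c) -> f x < f y.
Proof.
  intros Hxy Hf Hpos.
  destruct (MVT_cor2 f f' x y Hxy) as (c & Hc & Hcxy).
  { intros c Hc. apply is_derive_Reals, Hf, Hc. }
  assert (0 < f' c * (y - x)) by (apply Rmult_lt_0_compat; [apply Hpos, Hcxy | lra]).
  lra.
Qed.

Lemma v0_v1_bounds (mu : R) : 0 <= mu <= 2 ->
  0 <= v0 mu /\ v0 mu <= v1 mu /\ 1/2 <= v1 mu <= 1 /\ 1 - v0 mu = v1 mu.
Proof.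
  intros Hmu. unfold v0, v1.
  assert (0 < 2 + mu) by lra.
  repeat split;
    [ apply Rdiv_le_0_compat; lra
    | apply Rmult_le_reg_r with (2 + mu); [lra | field_simplify; lra] ..
    | field; lra ].
Qed.

Lemma v1_decreasing (a b : R) : 0 <= a -> a < b -> v1 b < v1 a.
Proof.
  intros Ha Hab. unfold v1.
  assert (0 < 2 * (b - a) / ((2 + a) * (2 + b))).
  { apply Rdiv_lt_0_compat; [lra | apply Rmult_lt_0_compat; lra]. }
  replace (2 / (2 + b)) with (2 / (2 + a) - 2 * (b - a) / ((2 + a) * (2 + b))) by (field; lra).
  lra.
Qed.

Lemma continuous_v1 (mu : R) : 0 <= mu -> continuous v1 mu.
Proof.
  intros Hmu. apply (@ex_derive_continuous R_AbsRing R_NormedModule).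
  unfold v1. auto_derive. lra.
Qed.

Section Regions.
Variable mu v : R.

Lemma h1_low : v <= v0 mu -> h1 mu v = 0.
Proof. intros; unfold h1; destruct Rle_dec; [auto | lra]. Qed.

Lemma h2_low : v <= v0 mu -> h2 mu v = v / (1 - v).
Proof. intros; unfold h2; destruct Rle_dec; [auto | lra]. Qed.

Lemma h1_mid : v0 mu < v <= v1 mu -> h1 mu v = v - mu / 2 * (1 - v).
Proof. intros; unfold h1; destruct Rle_dec; [lra|]; destruct Rle_dec; [auto | lra]. Qed.

Lemma h2_mid : v0 mu < v <= v1 mu -> h2 mu v = v + mu / 2 * v.
Proof. intros; unfold h2; destruct Rle_dec; [lra|]; destruct Rle_dec; [auto | lra]. Qed.

Hypothesis v0_le_v1 : v0 mu <= v1 mu.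

Lemma h1_high : v1 mu < v -> h1 mu v = 2 - 1 / v.
Proof. intros; unfold h1; destruct Rle_dec; [lra|]; destruct Rle_dec; [lra | auto]. Qed.

Lemma h2_high : v1 mu < v -> h2 mu v = 1.
Proof. intros; unfold h2; destruct Rle_dec; [lra|]; destruct Rle_dec; [lra | auto]. Qed.

Hypothesis v_in01 : 0 < v < 1.

Lemma RInt_psi_integrand :
  RInt (fun t => (if Rle_dec t v then 1 else 0) * h_mu mu t v) 0 1 = v * h1 mu v.
Proof.
  replace (v * h1 mu v) with (v * h1 mu v + (1 - v) * 0) by ring.
  apply RInt_two_step; auto; intros t Ht; unfold h_mu; destruct Rle_dec; lra.
Qed.

Lemma RInt_xi_integrand :
  RInt (fun t => (h_mu mu t v) ^ 2) 0 1 = v * h1 mu v ^ 2 + (1 - v) * h2 mu v ^ 2.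
Proof.
  apply RInt_two_step; auto; intros t Ht; unfold h_mu; destruct Rle_dec; lra.
Qed.

End Regions.

Definition psi_profile (w : R) : R := - 2 * w ^ 2 + 6 * w - 5 + 1 / w.

Definition xi_profile (w : R) : R :=
  - 4 * w ^ 2 + 20 * w - 17 + 2 / w - 1 / w ^ 2 - 12 * ln w.

Lemma psi_down_eq (mu : R) : 0 <= mu <= 2 -> psi_down mu = psi_profile (v1 mu).
Proof.
  intros Hmu. destruct (v0_v1_bounds mu Hmu) as (Ha & Hab & Hb & Hs).
  remember (v0 mu) as a eqn:Ea; remember (v1 mu) as b eqn:Eb; set (m := mu / 2).
  assert (HI : is_RInt (fun v => RInt (fun t => (if Rle_dec t v then 1 else 0) * h_mu mu t v) 0 1) 0 1
     (0 - 0 + ((1 + m) * b ^ 3 / 3 - m * b ^ 2 / 2 - ((1 + m) * a ^ 3 / 3 - m * a ^ 2 / 2))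
        + (1 ^ 2 - 1 - (b ^ 2 - b)))).
  { apply (@is_RInt_Chasles R_CompleteNormedModule _ 0 b 1); [apply (@is_RInt_Chasles R_CompleteNormedModule _ 0 a b)|].
    - apply (is_RInt_antiderivative _ (fun _ => 0) (fun _ => 0)); [lra | | |].
      + intros; auto_derive; auto.
      + intros; apply continuous_const.
      + intros x Hx. rewrite RInt_psi_integrand, h1_low by lra; ring.
    - apply (is_RInt_antiderivative _ (fun v => v * (v - m * (1 - v)))
                                      (fun v => (1 + m) * v ^ 3 / 3 - m * v ^ 2 / 2)); [lra | | |].
      + intros; auto_derive; auto. field.
      + intros; apply (@ex_derive_continuous R_AbsRing R_NormedModule); auto_derive; auto.
      + intros x Hx. rewrite RInt_psi_integrand, h1_mid by lra; reflexivity.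
    - apply (is_RInt_antiderivative _ (fun v => v * (2 - 1 / v)) (fun v => v ^ 2 - v)); [lra | | |].
      + intros; auto_derive; [lra|]. field. lra.
      + intros; apply (@ex_derive_continuous R_AbsRing R_NormedModule); auto_derive; lra.
      + intros x Hx. rewrite RInt_psi_integrand, h1_high by lra; reflexivity. }
  unfold psi_down, psi_h. rewrite (is_RInt_unique _ _ _ _ HI).
  subst a b m. unfold psi_profile, v0, v1. field. lra.
Qed.

Lemma xi_down_eq (mu : R) : 0 <= mu <= 2 -> xi_down mu = xi_profile (v1 mu).
Proof.
  intros Hmu. destruct (v0_v1_bounds mu Hmu) as (Ha & Hab & Hb & Hs).
  remember (v0 mu) as a eqn:Ea; remember (v1 mu) as b eqn:Eb; set (m := mu / 2).
  assert (HI : is_RInt (fun v => RInt (fun t => (h_mu mu t v) ^ 2) 0 1) 0 1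
     ((- a ^ 2 / 2 - a - ln (1 - a)) - (- 0 ^ 2 / 2 - 0 - ln (1 - 0))
      + ((1 - m ^ 2) * b ^ 3 / 3 + m ^ 2 * b ^ 2 / 2 - ((1 - m ^ 2) * a ^ 3 / 3 + m ^ 2 * a ^ 2 / 2))
      + (3 * 1 ^ 2 / 2 - 3 * 1 + ln 1 - (3 * b ^ 2 / 2 - 3 * b + ln b)))).
  { apply (@is_RInt_Chasles R_CompleteNormedModule _ 0 b 1); [apply (@is_RInt_Chasles R_CompleteNormedModule _ 0 a b)|].
    - apply (is_RInt_antiderivative _ (fun v => (1 - v) * (v / (1 - v)) ^ 2)
                                      (fun v => - v ^ 2 / 2 - v - ln (1 - v))); [lra | | |].
      + intros; auto_derive; [lra|]. field. lra.
      + intros; apply (@ex_derive_continuous R_AbsRing R_NormedModule); auto_derive; lra.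
      + intros x Hx. rewrite RInt_xi_integrand, h1_low, h2_low by lra; ring.
    - apply (is_RInt_antiderivative _ (fun v => v * (v - m * (1 - v)) ^ 2 + (1 - v) * (v + m * v) ^ 2)
                                      (fun v => (1 - m ^ 2) * v ^ 3 / 3 + m ^ 2 * v ^ 2 / 2)); [lra | | |].
      + intros; auto_derive; auto. field.
      + intros; apply (@ex_derive_continuous R_AbsRing R_NormedModule); auto_derive; auto.
      + intros x Hx. rewrite RInt_xi_integrand, h1_mid, h2_mid by lra; reflexivity.
    - apply (is_RInt_antiderivative _ (fun v => v * (2 - 1 / v) ^ 2 + (1 - v) * 1 ^ 2)
                                      (fun v => 3 * v ^ 2 / 2 - 3 * v + ln v)); [lra | | |].
      + intros; auto_derive; [lra|]. field. lra.
      + intros; apply (@ex_derive_continuous R_AbsRing R_NormedModule); auto_derive; lra.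
      + intros x Hx. rewrite RInt_xi_integrand, h1_high, h2_high by lra; reflexivity. }
  unfold xi_down, xi_h. rewrite (is_RInt_unique _ _ _ _ HI).
  rewrite Hs, !Rminus_0_r, ln_1. unfold xi_profile.
  set (L := ln b).
  subst a b m. unfold v0, v1. field. lra.
Qed.

Lemma continuous_psi_profile (w : R) : 0 < w -> continuous psi_profile w.
Proof. intros Hw. apply (@ex_derive_continuous R_AbsRing R_NormedModule). unfold psi_profile. auto_derive. lra. Qed.

Lemma continuous_xi_profile (w : R) : 0 < w -> continuous xi_profile w.
Proof.
  intros Hw. apply (@ex_derive_continuous R_AbsRing R_NormedModule). unfold xi_profile.
  auto_derive. assert (0 < w * (w * 1)) by nra. repeat split; lra.
Qed.

Lemma psi_profile_increasing (x y : R) : 1/2 <= x -> x < y -> y <= 1 ->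
  psi_profile x < psi_profile y.
Proof.
  intros Hx Hxy Hy.
  apply (lt_of_derive_pos _ (fun w => (2 * w - 1) * (- 2 * w ^ 2 + 2 * w + 1) / w ^ 2)); auto.
  - intros c Hc. unfold psi_profile. auto_derive; [lra|]. field. lra.
  - intros c Hc. apply Rdiv_lt_0_compat; [apply Rmult_lt_0_compat|]; nra.
Qed.

Lemma xi_profile_decreasing (x y : R) : 1/2 <= x -> x < y -> y <= 1 ->
  xi_profile y < xi_profile x.
Proof.
  intros Hx Hxy Hy.
  apply Ropp_lt_cancel.
  apply (lt_of_derive_pos (fun w => - xi_profile w)
           (fun w => (1 - w) * (2 * w - 1) * (- 4 * w ^ 2 + 4 * w + 2) / w ^ 3)); auto.
  - intros c Hc. unfold xi_profile.
    auto_derive; [assert (0 < c * (c * 1)) by nra; repeat split; lra|]. field. lra.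
  - intros c Hc. apply Rdiv_lt_0_compat; [|apply pow_lt; lra].
    apply Rmult_lt_0_compat; [apply Rmult_lt_0_compat|]; nra.
Qed.

Theorem mainTheorem5 :
  (forall mu : R, 0 <= mu <= 2 ->
     psi_down mu = - 2 * (v1 mu) ^ 2 + 6 * v1 mu - 5 + 1 / v1 mu /\
     xi_down mu = - 4 * (v1 mu) ^ 2 + 20 * v1 mu - 17 + 2 / v1 mu
                  - 1 / (v1 mu) ^ 2 - 12 * ln (v1 mu)) /\
  (forall mu : R, 0 <= mu <= 2 ->
     filterlim psi_down (within in02 (locally mu)) (locally (psi_down mu))) /\
  (forall a b : R, 0 <= a -> a < b -> b <= 2 -> psi_down b < psi_down a) /\
  psi_down 0 = 0 /\ psi_down 2 = - 1 / 2 /\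
  (forall mu : R, 0 <= mu <= 2 ->
     filterlim xi_down (within in02 (locally mu)) (locally (xi_down mu))) /\
  (forall a b : R, 0 <= a -> a < b -> b <= 2 -> xi_down a < xi_down b) /\
  xi_down 0 = 0 /\ xi_down 2 = 12 * ln 2 - 8.
Proof.
  assert (v1_0 : v1 0 = 1) by (unfold v1; field).
  assert (v1_2 : v1 2 = / 2) by (unfold v1; field).
  assert (v1_pos : forall mu, 0 <= mu <= 2 -> 0 < v1 mu).
  { intros mu Hmu. pose proof (v0_v1_bounds mu Hmu). lra. }
  assert (v1_order : forall a b, 0 <= a -> a < b -> b <= 2 ->
            1/2 <= v1 b /\ v1 b < v1 a /\ v1 a <= 1).
  { intros a b Ha Hab Hb. pose proof (v1_decreasing a b Ha Hab).
    pose proof (v0_v1_bounds a). pose proof (v0_v1_bounds b). lra. }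
  assert (continuous_through_v1 : forall (g : R -> R) mu, 0 <= mu <= 2 ->
            continuous g (v1 mu) -> continuous (fun x => g (v1 x)) mu).
  { intros g mu Hmu Hg. apply continuous_comp; [apply continuous_v1; lra | exact Hg]. }
  split.
  { intros mu Hmu. split; [apply psi_down_eq | apply xi_down_eq]; exact Hmu. }
  repeat split.
  - intros mu Hmu. apply (filterlim_within_continuous_eq _ _ _ _ Hmu psi_down_eq).
    apply continuous_through_v1, continuous_psi_profile, v1_pos; exact Hmu.
  - intros a b Ha Hab Hb. rewrite !psi_down_eq by lra.
    pose proof (v1_order a b Ha Hab Hb). apply psi_profile_increasing; lra.
  - rewrite psi_down_eq, v1_0 by lra. unfold psi_profile. field.
  - rewrite psi_down_eq, v1_2 by lra. unfold psi_profile. field.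
  - intros mu Hmu. apply (filterlim_within_continuous_eq _ _ _ _ Hmu xi_down_eq).
    apply continuous_through_v1, continuous_xi_profile, v1_pos; exact Hmu.
  - intros a b Ha Hab Hb. rewrite !xi_down_eq by lra.
    pose proof (v1_order a b Ha Hab Hb). apply xi_profile_decreasing; lra.
  - rewrite xi_down_eq, v1_0 by lra. unfold xi_profile. rewrite ln_1. field.
  - rewrite xi_down_eq, v1_2 by lra. unfold xi_profile. rewrite ln_Rinv by lra. field.
Qed.
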